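(* Fix $\beta_1,\beta_2\in(0,\infty)$, $\bar p\in(0,1)$ and set $p_0:=\frac{\bar p}{\bar p+(1-\bar p)\exp(-2d\beta_1)}\in(0,1)$. Then for any finite $\Lambda\subseteq\mathbb{Z}^d_n$ and any $m\in\mathbb{Z}^\Lambda$, $$\langle\cos(m\theta)\rangle_{\mu_{\Lambda,\beta_1,\beta_2,\kappa}}\leq\mathbb{E}_{p_0}\big[\langle\cos(m\theta)\rangle_{\mu_{\Lambda,\beta_1,\beta_2,r}}\big],$$ where $\kappa=\kappa(\bar p)$.
   Context: Fix $n\in\mathbb{N}$. $\mathbb{Z}^d_n$ is the graph obtained from $\mathbb{Z}^d$ by adding $n$ vertices on each edge; vertices of $\mathbb{Z}^d$ are identified with the corresponding vertices of $\mathbb{Z}^d_n$, and $x\sim_n y$ denotes adjacency in $\mathbb{Z}^d_n$. $m\theta:=\sum_{x\in\Lambda}m_x\theta_x$. For $r\in\{0,1\}^\Lambda$ and $\theta\in[0,2\pi)^\Lambda$, $H_{\Lambda,\beta_1,\beta_2}(r,\theta)=-\beta_1\sum_{x\sim_n y,\,x,y\in\Lambda,\,\{x,y\}\cap\mathbb{Z}^d\neq\emptyset}r_xr_y\cos(\theta_x-\theta_y)-\beta_2\sum_{x\sim_n y,\,x,y\in\Lambda,\,\{x,y\}\cap\mathbb{Z}^d=\emptyset}r_xr_y\cos(\theta_x-\theta_y)$. Quenched measure: $\mu_{\Lambda,\beta_1,\beta_2,r}(d\theta)=Z^{-1}e^{-H_{\Lambda,\beta_1,\beta_2}(r,\theta)}\prod_{x\in\Lambda}d\theta_x$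 ($d\theta_x$ uniform on $[0,2\pi)$). Let $\kappa(\bar p)=(\kappa_x)$ with $\kappa_x=(1-\bar p)\delta_0+\bar p\delta_1$ for $x\in\mathbb{Z}^d$ and $\kappa_x=\delta_1$ for $x\in\mathbb{Z}^d_n\setminus\mathbb{Z}^d$; annealed measure: $\mu_{\Lambda,\beta_1,\beta_2,\kappa}(dr\,d\theta)=Z^{-1}e^{-H_{\Lambda,\beta_1,\beta_2}(r,\theta)}\prod_{x\in\Lambda}d\kappa_x(r_x)d\theta_x$. $\mathbb{P}_{\Lambda,p}$ is the product measure on $\{0,1\}^\Lambda$ with $\mathbb{P}(r_x=1)=p$ for $x\in\Lambda\cap\mathbb{Z}^d$ and $\mathbb{P}(r_x=1)=1$ for $x\in\Lambda\setminus\mathbb{Z}^d$; $\mathbb{E}_p$ is its expectation. *)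

From Stdlib Require Import Reals Lra ZArith List ClassicalDescription.
From Coquelicot Require Import Coquelicot.
Import ListNotations.
Open Scope R_scope.

Definition site := list Z.

Definition add_unit (z : site) (i : nat) : site :=
  firstn i z ++ (nth i z 0%Z + 1)%Z :: skipn (S i) z.

(* Vertices of Z^d_n: either a vertex of Z^d, or the k-th (1 <= k <= n)
   added vertex on the edge {z, z + e_i}, counted from z. *)
Inductive vertex : Type :=
| Site : site -> vertex
| Mid  : site -> nat -> nat -> vertex.

Definition vertex_eq_dec (u v : vertex) : {u = v} + {u <> v}.
Proof. decide equality; try apply Nat.eq_dec; apply list_eq_dec, Z.eq_dec. Defined.

Definition is_site (v : vertex) : bool :=
  match v with Site _ => true | Mid _ _ _ => false end.

Definition valid_vertex (n d : nat) (v : vertex) : Prop :=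
  match v with
  | Site z => length z = d
  | Mid z i k => length z = d /\ (i < d)%nat /\ (1 <= k <= n)%nat
  end.

(* j-th vertex (0 <= j <= n+1) of the subdivided edge {z, z+e_i}. *)
Definition edge_pt (n : nat) (z : site) (i j : nat) : vertex :=
  if Nat.eqb j 0 then Site z
  else if Nat.eqb j (S n) then Site (add_unit z i)
  else Mid z i j.

Definition adj (n d : nat) (u v : vertex) : Prop :=
  exists (z : site) (i j : nat),
    length z = d /\ (i < d)%nat /\ (j <= n)%nat /\
    ((u = edge_pt n z i j /\ v = edge_pt n z i (S j)) \/
     (u = edge_pt n z i (S j) /\ v = edge_pt n z i j)).

Definition sumR {A} (f : A -> R) (l : list A) : R :=
  fold_right (fun a s => f a + s) 0 l.

Definition adjR (n d : nat) (u v : vertex) : R :=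
  if excluded_middle_informative (adj n d u v) then 1 else 0.

(* Sum over unordered edges {x,y} of Z^d_n inside Lambda, written as half of the
   sum over ordered pairs (Lambda has no duplicates). *)
Definition Ham (n d : nat) (Lam : list vertex) (b1 b2 : R)
  (r : vertex -> R) (th : vertex -> R) : R :=
  - (1/2) * sumR (fun x => sumR (fun y =>
        adjR n d x y *
        (if orb (is_site x) (is_site y) then b1 else b2) *
        r x * r y * cos (th x - th y)) Lam) Lam.

Definition upd (f : vertex -> R) (x : vertex) (t : R) : vertex -> R :=
  fun y => if vertex_eq_dec y x then t else f y.

Fixpoint integ (l : list vertex) (F : (vertex -> R) -> R) (th : vertex -> R) : R :=
  match l with
  | [] => F th
  | x :: l' => / (2 * PI) * RInt (fun t => integ l' F (upd th x t)) 0 (2 * PI)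
  end.

Definition theta0 : vertex -> R := fun _ => 0.

(* E_p[G(r)] for r_x ~ Bernoulli(p) independent on the sites in l,
   r_x = 1 elsewhere. *)
Fixpoint bern (p : R) (l : list vertex) (G : (vertex -> R) -> R) (r : vertex -> R) : R :=
  match l with
  | [] => G r
  | x :: l' => p * bern p l' G (upd r x 1) + (1 - p) * bern p l' G (upd r x 0)
  end.

Definition r1 : vertex -> R := fun _ => 1.

Definition Ep (p : R) (Lam : list vertex) (G : (vertex -> R) -> R) : R :=
  bern p (filter is_site Lam) G r1.

Definition cos_m (Lam : list vertex) (m : vertex -> Z) (th : vertex -> R) : R :=
  cos (sumR (fun x => IZR (m x) * th x) Lam).

Definition boltz (n d : nat) (Lam : list vertex) (b1 b2 : R) (r : vertex -> R)
  (th : vertex -> R) : R := exp (- Ham n d Lam b1 b2 r th).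

Definition quenched (n d : nat) (Lam : list vertex) (b1 b2 : R) (r : vertex -> R)
  (f : (vertex -> R) -> R) : R :=
  integ Lam (fun th => boltz n d Lam b1 b2 r th * f th) theta0 /
  integ Lam (fun th => boltz n d Lam b1 b2 r th) theta0.

(* annealed expectation <f>_{mu_{Lambda,b1,b2,kappa(pbar)}} *)
Definition annealed (n d : nat) (Lam : list vertex) (b1 b2 pbar : R)
  (f : (vertex -> R) -> R) : R :=
  Ep pbar Lam (fun r => integ Lam (fun th => boltz n d Lam b1 b2 r th * f th) theta0) /
  Ep pbar Lam (fun r => integ Lam (fun th => boltz n d Lam b1 b2 r th) theta0).

(* Two facts drive the comparison. First, Ginibre's inequality for the XY model with
   nonnegative couplings: the quenched expectation <cos (m theta)>_r is nondecreasing in the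
   dilution variables r. Writing N_r for the unnormalised integral of cos (m theta), the
   difference N_r' Z_r - N_r Z_r' (r <= r') is the two-replica integral of
   (cos (m th) - cos (m th')) exp (sum_j c_j (cos (A_j th) +- cos (A_j th'))) with c_j >= 0;
   expanding the exponential, every product of such factors has a nonnegative two-replica
   integral, since product-to-sum formulas turn it into a square.
   Second, switching on one site variable changes the energy by at most 2 d beta1, so
   Z(r, r_x = 1) <= exp (2 d beta1) Z(r, r_x = 0). Hence in the annealed measure each r_x,
   given the others, is stochastically dominated by a Bernoulli(p0) variable; as the quenched
   expectation is increasing, a site-by-site induction gives the inequality. *)

From Stdlib Require Import Reals ZArith List.
From Stdlib Require Import Lra Lia FunctionalExtensionality Bool.
From Coquelicot Require Import Coquelicot.
Import ListNotations.
Open Scope R_scope.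

Lemma sumR_ext {A} (f g : A -> R) l :
  (forall x, In x l -> f x = g x) -> sumR f l = sumR g l.
Proof. induction l; simpl; intros H; auto. rewrite H, IHl; auto. Qed.

Lemma sumR_0 {A} (l : list A) : sumR (fun _ => 0) l = 0.
Proof. induction l; simpl; [ring| rewrite IHl; ring]. Qed.

Lemma sumR_plus {A} (f g : A -> R) l :
  sumR (fun x => f x + g x) l = sumR f l + sumR g l.
Proof. induction l; simpl; [ring| rewrite IHl; ring]. Qed.

Lemma sumR_minus {A} (f g : A -> R) l :
  sumR (fun x => f x - g x) l = sumR f l - sumR g l.
Proof. induction l; simpl; [ring| rewrite IHl; ring]. Qed.

Lemma sumR_scal {A} c (f : A -> R) l : sumR (fun x => c * f x) l = c * sumR f l.
Proof. induction l; simpl; [ring| rewrite IHl; ring]. Qed.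

Lemma sumR_mult_r {A} c (f : A -> R) l : sumR f l * c = sumR (fun x => f x * c) l.
Proof. induction l; simpl; [ring| rewrite <- IHl; ring]. Qed.

Lemma sumR_le {A} (f g : A -> R) l :
  (forall x, In x l -> f x <= g x) -> sumR f l <= sumR g l.
Proof.
  induction l as [|a l IH]; simpl; intros H; [lra|].
  pose proof (H a (or_introl eq_refl)). pose proof (IH (fun x Hx => H x (or_intror Hx))). lra.
Qed.

Lemma sumR_abs_le {A} (f : A -> R) l : Rabs (sumR f l) <= sumR (fun x => Rabs (f x)) l.
Proof.
  induction l as [|a l IH]; simpl; [rewrite Rabs_R0; lra|].
  eapply Rle_trans; [apply Rabs_triang| lra].
Qed.

Lemma sumR_nonneg {A} (f : A -> R) l : (forall x, In x l -> 0 <= f x) -> 0 <= sumR f l.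
Proof. intros H. rewrite <- (sumR_0 l). now apply sumR_le. Qed.

Lemma sumR_app {A} (f : A -> R) l1 l2 : sumR f (l1 ++ l2) = sumR f l1 + sumR f l2.
Proof. induction l1; simpl; [ring| rewrite IHl1; ring]. Qed.

Lemma sumR_map {A B} (f : B -> R) (g : A -> B) l :
  sumR f (map g l) = sumR (fun a => f (g a)) l.
Proof. induction l; simpl; auto. rewrite IHl; auto. Qed.

Lemma sumR_flat_map {A B} (f : B -> R) (g : A -> list B) l :
  sumR f (flat_map g l) = sumR (fun a => sumR f (g a)) l.
Proof. induction l; simpl; auto. rewrite sumR_app, IHl; auto. Qed.

Lemma sumR_list_prod {A B} (f : A * B -> R) l1 l2 :
  sumR f (list_prod l1 l2) = sumR (fun a => sumR (fun b => f (a, b)) l2) l1.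
Proof. induction l1; simpl; auto. rewrite sumR_app, IHl1, sumR_map; auto. Qed.

Lemma sumR_indicator {A} (f : A -> bool) l :
  sumR (fun v => if f v then 1 else 0) l = INR (length (filter f l)).
Proof.
  induction l as [|a l IH]; simpl; auto. rewrite IH.
  destruct (f a); simpl length; [rewrite S_INR|]; ring.
Qed.

Lemma exp_le_compat x y : x <= y -> exp x <= exp y.
Proof. intros [H| ->]; [left; now apply exp_increasing| lra]. Qed.

Lemma exp_lipschitz x y M : Rabs x <= M -> Rabs y <= M ->
  Rabs (exp x - exp y) <= exp (3 * M) * Rabs (x - y).
Proof.
  intros Hx Hy. apply (bounded_variation exp exp). intros t Ht; split.
  - apply is_derive_exp.
  - rewrite Rabs_right by (left; apply exp_pos). apply exp_le_compat.
    assert (Rabs (x - y) <= Rabs x + Rabs y)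
      by (unfold Rminus; rewrite <- (Rabs_Ropp y); apply Rabs_triang).
    pose proof (Rabs_triang_inv t y). pose proof (Rle_abs t). lra.
Qed.

Lemma cos_lipschitz x y : Rabs (cos x - cos y) <= Rabs (x - y).
Proof.
  rewrite <- (Rmult_1_l (Rabs (x - y))).
  apply (bounded_variation cos (fun t => - sin t)). intros t _; split.
  - auto_derive; auto; ring.
  - rewrite Rabs_Ropp; apply Rabs_le, SIN_bound.
Qed.

(* The integrands handled by [integ]: bounded Lipschitz functions for a closeness relation,
   used both for configurations and for pairs of configurations (two replicas). *)
Section BoundedLipschitz.
Variable X : Type.
Variable close : R -> X -> X -> Prop.
Hypothesis close_nonneg : forall d a b, close d a b -> 0 <= d.

Definition bounded (F : X -> R) := exists M, forall a, Rabs (F a) <= M.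
Definition lipschitz (F : X -> R) :=
  exists L, forall d a b, close d a b -> Rabs (F a - F b) <= L * d.
Definition BL F := bounded F /\ lipschitz F.

Lemma BL_ext F G : (forall a, F a = G a) -> BL F -> BL G.
Proof. intros E; replace G with F; auto; now apply functional_extensionality. Qed.

Lemma BL_const c : BL (fun _ => c).
Proof.
  split; [exists (Rabs c); intros; lra|].
  exists 0; intros d a b _. rewrite Rminus_diag, Rabs_R0; lra.
Qed.

Lemma BL_plus F G : BL F -> BL G -> BL (fun a => F a + G a).
Proof.
  intros [[M1 B1] [L1 H1]] [[M2 B2] [L2 H2]]; split.
  - exists (M1 + M2); intros a. eapply Rle_trans; [apply Rabs_triang|].
    specialize (B1 a); specialize (B2 a); lra.
  - exists (L1 + L2); intros d a b H.
    specialize (H1 d a b H); specialize (H2 d a b H).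
    replace (F a + G a - (F b + G b)) with ((F a - F b) + (G a - G b)) by ring.
    eapply Rle_trans; [apply Rabs_triang|]; lra.
Qed.

Lemma BL_scal c F : BL F -> BL (fun a => c * F a).
Proof.
  intros [[M B] [L H]]; split.
  - exists (Rabs c * M); intros a; rewrite Rabs_mult.
    apply Rmult_le_compat_l; [apply Rabs_pos|auto].
  - exists (Rabs c * L); intros d a b Hc.
    replace (c * F a - c * F b) with (c * (F a - F b)) by ring.
    rewrite Rabs_mult, Rmult_assoc; apply Rmult_le_compat_l; [apply Rabs_pos|auto].
Qed.

Lemma BL_minus F G : BL F -> BL G -> BL (fun a => F a - G a).
Proof.
  intros HF HG. apply (BL_ext (fun a => F a + -1 * G a)); [intros; ring|].
  apply BL_plus; auto; now apply BL_scal.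
Qed.

Lemma BL_mult F G : BL F -> BL G -> BL (fun a => F a * G a).
Proof.
  intros [[M1 B1] [L1 H1]] [[M2 B2] [L2 H2]]; split.
  - exists (M1 * M2); intros a; rewrite Rabs_mult.
    apply Rmult_le_compat; try apply Rabs_pos; auto.
  - exists (M1 * L2 + M2 * L1); intros d a b H.
    specialize (H1 d a b H); specialize (H2 d a b H). pose proof (close_nonneg d a b H).
    replace (F a * G a - F b * G b) with (F a * (G a - G b) + G b * (F a - F b)) by ring.
    eapply Rle_trans; [apply Rabs_triang|]. rewrite !Rabs_mult.
    assert (Rabs (F a) * Rabs (G a - G b) <= M1 * (L2 * d))
      by (apply Rmult_le_compat; try apply Rabs_pos; auto).
    assert (Rabs (G b) * Rabs (F a - F b) <= M2 * (L1 * d))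
      by (apply Rmult_le_compat; try apply Rabs_pos; auto).
    lra.
Qed.

Lemma BL_pow F k : BL F -> BL (fun a => F a ^ k).
Proof. intros H; induction k; simpl; [apply BL_const| now apply BL_mult]. Qed.

Lemma BL_sumR {I} (f : I -> X -> R) (l : list I) :
  (forall i, In i l -> BL (f i)) -> BL (fun a => sumR (fun i => f i a) l).
Proof.
  induction l as [|i l IH]; intros H; simpl; [apply BL_const|].
  apply BL_plus; [apply H; now left| apply IH; intros; apply H; now right].
Qed.

Lemma BL_exp F : BL F -> BL (fun a => exp (F a)).
Proof.
  intros [[M B] [L H]]; split.
  - exists (exp M); intros a. rewrite Rabs_right by (left; apply exp_pos).
    apply exp_le_compat. specialize (B a). apply Rabs_le_between in B. lra.
  - exists (exp (3 * M) * L); intros d a b Hc.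
    eapply Rle_trans; [apply exp_lipschitz; apply B|].
    rewrite Rmult_assoc; apply Rmult_le_compat_l; [left; apply exp_pos| auto].
Qed.

Lemma BL_cos F : lipschitz F -> BL (fun a => cos (F a)).
Proof.
  intros [L H]; split.
  - exists 1; intros a; apply Rabs_le, COS_bound.
  - exists L; intros d a b Hc; eapply Rle_trans; [apply cos_lipschitz| auto].
Qed.

End BoundedLipschitz.

(** * Iterated averages over the angles *)

Definition close_cfg (d : R) (a b : vertex -> R) := forall x, Rabs (a x - b x) <= d.

Lemma close_cfg_nonneg d a b : close_cfg d a b -> 0 <= d.
Proof.
  intros H. specialize (H (Site nil)).
  pose proof (Rabs_pos (a (Site nil) - b (Site nil))); lra.
Qed.

Lemma close_cfg_refl d a : 0 <= d -> close_cfg d a a.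
Proof. intros H x. rewrite Rminus_diag, Rabs_R0; auto. Qed.

Lemma close_cfg_upd d a b x t : close_cfg d a b -> close_cfg d (upd a x t) (upd b x t).
Proof.
  intros H y; unfold upd; destruct (vertex_eq_dec y x); auto.
  rewrite Rminus_diag, Rabs_R0; apply (close_cfg_nonneg d a b H).
Qed.

Lemma close_cfg_upd_same a x s t : close_cfg (Rabs (s - t)) (upd a x s) (upd a x t).
Proof.
  intros y; unfold upd; destruct (vertex_eq_dec y x); [lra|].
  rewrite Rminus_diag, Rabs_R0; apply Rabs_pos.
Qed.

Notation BLV := (BL (vertex -> R) close_cfg).

Lemma lipschitz_continuous (f : R -> R) K :
  (forall s t, Rabs (f s - f t) <= K * Rabs (s - t)) -> forall z, continuous f z.
Proof.
  intros H z. apply continuity_pt_filterlim. intros eps Heps.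
  pose proof (Rabs_pos K).
  exists (eps / (Rabs K + 1)). split; [apply Rdiv_lt_0_compat; lra|].
  intros x [_ Hx]; simpl in *; unfold Rdist in *.
  eapply Rle_lt_trans; [apply H|].
  apply Rle_lt_trans with (Rabs K * Rabs (x - z));
    [apply Rmult_le_compat_r; [apply Rabs_pos| apply RRle_abs]|].
  apply Rle_lt_trans with (Rabs K * (eps / (Rabs K + 1))); [apply Rmult_le_compat_l; lra|].
  apply (Rmult_lt_reg_r (Rabs K + 1)); [lra|].
  replace (Rabs K * (eps / (Rabs K + 1)) * (Rabs K + 1)) with (Rabs K * eps) by (field; lra).
  nra.
Qed.

Lemma ex_RInt_upd (G : (vertex -> R) -> R) L th x :
  (forall d a b, close_cfg d a b -> Rabs (G a - G b) <= L * d) ->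
  ex_RInt (fun t => G (upd th x t)) 0 (2 * PI).
Proof.
  intros H. apply (@ex_RInt_continuous R_CompleteNormedModule); intros z _.
  apply (lipschitz_continuous _ L). intros s t. apply H, close_cfg_upd_same.
Qed.

Lemma two_PI_pos : 0 < 2 * PI.
Proof. pose proof PI_RGT_0; lra. Qed.

Lemma RInt_const_R a b c : RInt (fun _ => c) a b = (b - a) * c.
Proof. exact (RInt_const a b c). Qed.

Lemma average_dist_le f g e :
  ex_RInt f 0 (2 * PI) -> ex_RInt g 0 (2 * PI) -> (forall t, Rabs (f t - g t) <= e) ->
  Rabs (/ (2 * PI) * RInt f 0 (2 * PI) - / (2 * PI) * RInt g 0 (2 * PI)) <= e.
Proof.
  intros Hf Hg H. pose proof two_PI_pos.
  rewrite <- Rmult_minus_distr_l, Rabs_mult, Rabs_right by (left; apply Rinv_0_lt_compat; lra).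
  replace (RInt f 0 (2 * PI) - RInt g 0 (2 * PI)) with (RInt (fun t => f t - g t) 0 (2 * PI))
    by exact (RInt_minus f g 0 (2 * PI) Hf Hg).
  apply Rle_trans with (/ (2 * PI) * ((2 * PI - 0) * e)); [|right; field; lra].
  apply Rmult_le_compat_l; [left; apply Rinv_0_lt_compat; lra|].
  apply abs_RInt_le_const; [lra| apply (ex_RInt_minus (V := R_NormedModule)); auto| auto].
Qed.

Lemma integ_bounded_lipschitz l : forall F M L,
  (forall a, Rabs (F a) <= M) ->
  (forall d a b, close_cfg d a b -> Rabs (F a - F b) <= L * d) ->
  (forall th, Rabs (integ l F th) <= M) /\
  (forall d a b, close_cfg d a b -> Rabs (integ l F a - integ l F b) <= L * d).
Proof.
  induction l as [|x l IH]; intros F M L HB HL; simpl; [split; auto|].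
  destruct (IH F M L HB HL) as [B1 L1].
  pose proof (fun th => ex_RInt_upd _ L th x L1) as Hex.
  split.
  - intros th.
    assert (A := average_dist_le _ (fun _ => 0) M (Hex th) (ex_RInt_const 0 _ 0)).
    rewrite RInt_const_R, Rmult_0_r, Rmult_0_r, Rminus_0_r in A.
    apply A; intros t; rewrite Rminus_0_r; apply B1.
  - intros d a b Hc. apply average_dist_le; auto.
    intros t. apply L1, close_cfg_upd, Hc.
Qed.

Lemma integ_BL l F : BLV F -> BLV (integ l F).
Proof.
  intros [[M B] [L H]]. destruct (integ_bounded_lipschitz l F M L B H) as [B' H'].
  split; [exists M | exists L]; auto.
Qed.

Lemma ex_RInt_integ l F th x : BLV F -> ex_RInt (fun t => integ l F (upd th x t)) 0 (2 * PI).
Proof. intros HF. destruct (integ_BL l F HF) as [_ [L H]]. eapply ex_RInt_upd; eauto. Qed.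

Lemma integ_ext l F G th : (forall a, F a = G a) -> integ l F th = integ l G th.
Proof. intros E; replace G with F; auto; now apply functional_extensionality. Qed.

Lemma integ_const l : forall c th, integ l (fun _ => c) th = c.
Proof.
  induction l as [|x l IH]; intros c th; simpl; auto.
  rewrite (RInt_ext _ (fun _ => c)), RInt_const_R by auto.
  pose proof two_PI_pos; field; lra.
Qed.

Lemma integ_plus l : forall F G th, BLV F -> BLV G ->
  integ l (fun a => F a + G a) th = integ l F th + integ l G th.
Proof.
  induction l as [|x l IH]; intros F G th HF HG; simpl; auto.
  rewrite <- Rmult_plus_distr_l.
  rewrite <- (RInt_plus (V := R_CompleteNormedModule)) by (apply ex_RInt_integ; auto).
  f_equal. apply RInt_ext; intros; auto.
Qed.

Lemma integ_scal l : forall c F th, BLV F -> integ l (fun a => c * F a) th = c * integ l F th.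
Proof.
  induction l as [|x l IH]; intros c F th HF; simpl; auto.
  rewrite (RInt_ext _ (fun t => c * integ l F (upd th x t))) by auto.
  rewrite (RInt_scal (V := R_CompleteNormedModule)) by (apply ex_RInt_integ; auto).
  unfold scal; simpl; unfold mult; simpl; ring.
Qed.

Lemma integ_minus l F G th : BLV F -> BLV G ->
  integ l (fun a => F a - G a) th = integ l F th - integ l G th.
Proof.
  intros HF HG. rewrite (integ_ext l _ (fun a => F a + -1 * G a)) by (intros; ring).
  rewrite integ_plus, integ_scal; auto; [ring|]. now apply BL_scal.
Qed.

Lemma integ_le l : forall F G th, BLV F -> BLV G -> (forall a, F a <= G a) ->
  integ l F th <= integ l G th.
Proof.
  induction l as [|x l IH]; intros F G th HF HG H; simpl; auto.
  pose proof two_PI_pos. apply Rmult_le_compat_l; [left; apply Rinv_0_lt_compat; lra|].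
  apply RInt_le; try (apply ex_RInt_integ; auto); try lra. intros; apply IH; auto.
Qed.

Lemma integ_dist_le l F G th e : BLV F -> BLV G -> (forall a, Rabs (F a - G a) <= e) ->
  Rabs (integ l F th - integ l G th) <= e.
Proof.
  intros HF HG H. rewrite <- integ_minus by auto.
  assert (HD : BLV (fun a => F a - G a)) by (apply BL_minus; auto).
  apply Rabs_le; split.
  - rewrite <- (integ_const l (- e) th). apply integ_le; auto; [apply BL_const|].
    intros a; specialize (H a); apply Rabs_le_between in H; lra.
  - rewrite <- (integ_const l e th). apply integ_le; auto; [apply BL_const|].
    intros a; specialize (H a); apply Rabs_le_between in H; lra.
Qed.

Lemma integ_abs_le l G th M : BLV G -> (forall a, Rabs (G a) <= M) -> Rabs (integ l G th) <= M.
Proof.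
  intros HG H. rewrite <- (Rminus_0_r (integ l G th)), <- (integ_const l 0 th).
  apply integ_dist_le; auto; [apply BL_const|]. intros a; rewrite Rminus_0_r; auto.
Qed.

Definition dot (Lam : list vertex) (A : vertex -> Z) (th : vertex -> R) : R :=
  sumR (fun x => IZR (A x) * th x) Lam.

Definition zadd (a b : vertex -> Z) : vertex -> Z := fun x => (a x + b x)%Z.
Definition zsub (a b : vertex -> Z) : vertex -> Z := fun x => (a x - b x)%Z.

Lemma dot_zadd Lam a b th : dot Lam (zadd a b) th = dot Lam a th + dot Lam b th.
Proof.
  unfold dot, zadd. rewrite <- sumR_plus. apply sumR_ext; intros; rewrite plus_IZR; ring.
Qed.

Lemma dot_zsub Lam a b th : dot Lam (zsub a b) th = dot Lam a th - dot Lam b th.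
Proof.
  unfold dot, zsub. rewrite <- sumR_minus. apply sumR_ext; intros; rewrite minus_IZR; ring.
Qed.

Lemma dot_zero_l Lam A th : (forall x, A x = 0%Z) -> dot Lam A th = 0.
Proof.
  intros H; unfold dot. rewrite <- (sumR_0 Lam).
  apply sumR_ext; intros x _; rewrite H; apply Rmult_0_l.
Qed.

Lemma dot_zero_r Lam A : dot Lam A theta0 = 0.
Proof. unfold dot, theta0. induction Lam as [|x l IH]; simpl; [|rewrite IH]; ring. Qed.

Lemma dot_lipschitz Lam A : forall d a b, close_cfg d a b ->
  Rabs (dot Lam A a - dot Lam A b) <= sumR (fun x => Rabs (IZR (A x))) Lam * d.
Proof.
  intros d a b H. unfold dot. rewrite <- sumR_minus, sumR_mult_r.
  eapply Rle_trans; [apply sumR_abs_le| apply sumR_le; intros x _].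
  rewrite <- Rmult_minus_distr_l, Rabs_mult.
  apply Rmult_le_compat_l; [apply Rabs_pos| apply H].
Qed.

Lemma BL_cos_dot Lam A : BLV (fun th => cos (dot Lam A th)).
Proof. apply BL_cos. eexists; apply dot_lipschitz. Qed.

Definition delta (u x : vertex) : R := if vertex_eq_dec u x then 1 else 0.

Lemma sumR_delta (g : vertex -> R) l x : NoDup l -> In x l ->
  sumR (fun u => delta u x * g u) l = g x.
Proof.
  intros ND; induction ND as [|y l Hy ND IH]; intros Hx; [destruct Hx|]. simpl. unfold delta at 1.
  destruct (vertex_eq_dec y x) as [<-|E].
  - rewrite (sumR_ext _ (fun _ => 0)), sumR_0; [ring|].
    intros u Hu; unfold delta; destruct (vertex_eq_dec u y); [subst; contradiction| ring].
  - destruct Hx as [->|Hx]; [congruence|]. rewrite IH; auto. ring.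
Qed.

Lemma dot_upd_notin Lam A th x t : ~ In x Lam -> dot Lam A (upd th x t) = dot Lam A th.
Proof.
  intros H; unfold dot; apply sumR_ext; intros y Hy; unfold upd.
  destruct (vertex_eq_dec y x); [subst; contradiction| auto].
Qed.

Lemma dot_upd Lam A th x t : NoDup Lam -> In x Lam ->
  dot Lam A (upd th x t) = dot Lam A th + IZR (A x) * (t - th x).
Proof.
  intros ND; induction ND as [|y l Hy ND IH]; intros Hx; [destruct Hx|].
  unfold dot; simpl; fold (dot l A (upd th x t)) (dot l A th).
  unfold upd at 1; destruct (vertex_eq_dec y x) as [<-|E].
  - rewrite dot_upd_notin by auto. ring.
  - destruct Hx as [->|Hx]; [congruence|]. rewrite IH by auto. ring.
Qed.

Lemma sin_period_Z c k : sin (c + 2 * IZR k * PI) = sin c.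
Proof.
  destruct (Z_le_gt_dec 0 k).
  - replace k with (Z.of_nat (Z.to_nat k)) by lia. rewrite <- INR_IZR_INZ. apply sin_period.
  - replace k with (- Z.of_nat (Z.to_nat (- k)))%Z by lia. rewrite opp_IZR, <- INR_IZR_INZ.
    rewrite <- (sin_period (c + 2 * - INR (Z.to_nat (- k)) * PI) (Z.to_nat (- k))).
    f_equal; ring.
Qed.

Lemma RInt_cos_Z (k : Z) c :
  RInt (fun t => cos (IZR k * t + c)) 0 (2 * PI) = if Z.eqb k 0 then 2 * PI * cos c else 0.
Proof.
  destruct (Z.eqb_spec k 0) as [->|Hk].
  - rewrite (RInt_ext _ (fun _ => cos c)) by (intros; rewrite Rmult_0_l, Rplus_0_l; auto).
    rewrite RInt_const_R; simpl; ring.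
  - apply is_RInt_unique. apply not_0_IZR in Hk.
    pose proof (is_RInt_derive (fun t => sin (IZR k * t + c) / IZR k)
      (fun t => cos (IZR k * t + c)) 0 (2 * PI)) as D; cbv beta in D.
    match type of D with _ -> _ -> is_RInt _ _ _ ?v => replace v with 0 in D end.
    + apply D; intros x _.
      * auto_derive; auto. field; auto.
      * apply (ex_derive_continuous (K := R_AbsRing) (V := R_NormedModule)). auto_derive; auto.
    + unfold minus, plus, opp; simpl.
      replace (IZR k * (2 * PI) + c) with (c + 2 * IZR k * PI) by ring.
      rewrite sin_period_Z, Rmult_0_r, Rplus_0_l. field; auto.
Qed.

Definition vanishes_on (l : list vertex) (A : vertex -> Z) : bool :=
  forallb (fun x => Z.eqb (A x) 0) l.

Lemma integ_cos_dot Lam A : NoDup Lam -> forall l, incl l Lam -> forall th,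
  integ l (fun a => cos (dot Lam A a)) th = if vanishes_on l A then cos (dot Lam A th) else 0.
Proof.
  intros ND l; induction l as [|x l IH]; intros Hinc th; simpl; auto.
  assert (Hx : In x Lam) by (apply Hinc; now left).
  assert (Hl : incl l Lam) by (intros y Hy; apply Hinc; now right).
  rewrite (RInt_ext _ (fun t => if vanishes_on l A
      then cos (IZR (A x) * t + (dot Lam A th - IZR (A x) * th x)) else 0)).
  2:{ intros t _. rewrite IH by auto. destruct (vanishes_on l A); auto.
      rewrite dot_upd by auto. f_equal; ring. }
  destruct (vanishes_on l A); [rewrite andb_true_r| rewrite andb_false_r, RInt_const_R; ring].
  rewrite RInt_cos_Z. destruct (Z.eqb_spec (A x) 0) as [->|_]; [|ring].
  pose proof two_PI_pos. field_simplify; [|lra]. do 2 f_equal. ring.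
Qed.

Lemma integ_cos_dot_full Lam A : NoDup Lam ->
  integ Lam (fun a => cos (dot Lam A a)) theta0 = if vanishes_on Lam A then 1 else 0.
Proof.
  intros ND. rewrite integ_cos_dot by (auto; apply incl_refl).
  rewrite dot_zero_r, cos_0; auto.
Qed.

(** * Two replicas and Ginibre's inequality *)

Definition cfg2 := ((vertex -> R) * (vertex -> R))%type.

Definition close2 (d : R) (p q : cfg2) :=
  close_cfg d (fst p) (fst q) /\ close_cfg d (snd p) (snd q).

Lemma close2_nonneg d p q : close2 d p q -> 0 <= d.
Proof. intros [H _]; eapply close_cfg_nonneg; eauto. Qed.

Notation BL2 := (BL cfg2 close2).

#[local] Hint Resolve BL_const BL_plus BL_scal BL_minus BL_exp BL_cos_dot : bl.
#[local] Hint Extern 1 (BL _ _ (fun _ => _ * _)) =>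
  apply BL_mult; [first [exact close_cfg_nonneg | exact close2_nonneg] | |] : bl.

Lemma BL2_fst f : BLV f -> BL2 (fun p => f (fst p)).
Proof. intros [[M B] [L H]]; split; [exists M; auto| exists L; intros d p q [H1 _]; auto]. Qed.

Lemma BL2_snd f : BLV f -> BL2 (fun p => f (snd p)).
Proof. intros [[M B] [L H]]; split; [exists M; auto| exists L; intros d p q [_ H1]; auto]. Qed.

Lemma BL2_slice F a : BL2 F -> BLV (fun b => F (a, b)).
Proof.
  intros [[M B] [L H]]; split; [exists M; auto| exists L; intros d p q Hc].
  apply H; split; simpl; auto. apply close_cfg_refl; eapply close_cfg_nonneg; eauto.
Qed.

Lemma BL2_prod f g : BLV f -> BLV g -> BL2 (fun p => f (fst p) * g (snd p)).
Proof.
  intros Hf Hg. apply BL_mult; [exact close2_nonneg| now apply BL2_fst| now apply BL2_snd].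
Qed.

Section Replicas.
Variable Lam : list vertex.

Definition integ2 (F : cfg2 -> R) : R :=
  integ Lam (fun a => integ Lam (fun b => F (a, b)) theta0) theta0.

Lemma BL2_integ_snd F : BL2 F -> BLV (fun a => integ Lam (fun b => F (a, b)) theta0).
Proof.
  intros HF. pose proof HF as [[M B] [L H]]. split.
  - exists M; intros a. apply integ_abs_le; auto. now apply BL2_slice.
  - exists L; intros d a a' Hc. apply integ_dist_le; try now apply BL2_slice.
    intros b. apply H. split; simpl; auto. apply close_cfg_refl; eapply close_cfg_nonneg; eauto.
Qed.

Lemma integ2_ext F G : (forall p, F p = G p) -> integ2 F = integ2 G.
Proof. intros E; replace G with F; auto; now apply functional_extensionality. Qed.

Lemma integ2_const c : integ2 (fun _ => c) = c.
Proof.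
  unfold integ2. rewrite (integ_ext Lam _ (fun _ => c)) by (intros; apply integ_const).
  apply integ_const.
Qed.

Lemma integ2_plus F G : BL2 F -> BL2 G -> integ2 (fun p => F p + G p) = integ2 F + integ2 G.
Proof.
  intros HF HG. unfold integ2.
  rewrite (integ_ext Lam _ (fun a => integ Lam (fun b => F (a, b)) theta0
                                     + integ Lam (fun b => G (a, b)) theta0)).
  - apply integ_plus; now apply BL2_integ_snd.
  - intros a. apply integ_plus; now apply BL2_slice.
Qed.

Lemma integ2_scal c F : BL2 F -> integ2 (fun p => c * F p) = c * integ2 F.
Proof.
  intros HF. unfold integ2.
  rewrite (integ_ext Lam _ (fun a => c * integ Lam (fun b => F (a, b)) theta0)).
  - apply integ_scal; now apply BL2_integ_snd.
  - intros a. apply integ_scal; now apply BL2_slice.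
Qed.

Lemma integ2_minus F G : BL2 F -> BL2 G -> integ2 (fun p => F p - G p) = integ2 F - integ2 G.
Proof.
  intros HF HG. rewrite (integ2_ext _ (fun p => F p + -1 * G p)) by (intros; ring).
  rewrite integ2_plus, integ2_scal; auto with bl. ring.
Qed.

Lemma integ2_le F G : BL2 F -> BL2 G -> (forall p, F p <= G p) -> integ2 F <= integ2 G.
Proof.
  intros HF HG H. unfold integ2. apply integ_le; try now apply BL2_integ_snd.
  intros a; apply integ_le; try now apply BL2_slice. intros; apply H.
Qed.

Lemma integ2_sumR {I} (f : I -> cfg2 -> R) (l : list I) : (forall i, In i l -> BL2 (f i)) ->
  integ2 (fun p => sumR (fun i => f i p) l) = sumR (fun i => integ2 (f i)) l.
Proof.
  induction l as [|i l IH]; intros H; simpl; [apply integ2_const|].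
  assert (Hl : forall j, In j l -> BL2 (f j)) by (intros; apply H; now right).
  rewrite integ2_plus, IH; auto; [apply H; now left| now apply BL_sumR].
Qed.

Lemma integ2_prod f g : BLV f -> BLV g ->
  integ2 (fun p => f (fst p) * g (snd p)) = integ Lam f theta0 * integ Lam g theta0.
Proof.
  intros Hf Hg. unfold integ2; simpl.
  rewrite (integ_ext Lam _ (fun a => integ Lam g theta0 * f a)).
  - rewrite integ_scal; auto; ring.
  - intros a. rewrite integ_scal; auto; ring.
Qed.

End Replicas.

Definition sign (b : bool) : R := if b then 1 else -1.

(* [(A, s)] encodes the function [cos (A . th) + sign s * cos (A . th')] of two replicas. *)
Definition factor := ((vertex -> Z) * bool)%type.

Lemma vanishes_on_spec l A : vanishes_on l A = true <-> forall x, In x l -> A x = 0%Z.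
Proof.
  unfold vanishes_on. rewrite forallb_forall.
  split; intros H x Hx; apply Z.eqb_eq; auto.
Qed.

Lemma vanishes_on_zadd_zsub l a b :
  vanishes_on l (zadd a b) && vanishes_on l (zsub a b) = vanishes_on l a && vanishes_on l b.
Proof.
  apply eq_true_iff_eq. rewrite !andb_true_iff, !vanishes_on_spec. unfold zadd, zsub.
  split; intros [Ha Hb]; split; intros x Hx; specialize (Ha x Hx); specialize (Hb x Hx); lia.
Qed.

Ltac zvec_eq := apply functional_extensionality; intros; unfold zadd, zsub; cbv beta; lia.

Section Ginibre.
Variable Lam : list vertex.
Hypothesis ND : NoDup Lam.

Definition cos_fst (A : vertex -> Z) (p : cfg2) := cos (dot Lam A (fst p)).
Definition cos_snd (A : vertex -> Z) (p : cfg2) := cos (dot Lam A (snd p)).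

Definition ginibre_factor (f : factor) (p : cfg2) : R :=
  cos_fst (fst f) p + sign (snd f) * cos_snd (fst f) p.

Definition ginibre_prod (L : list factor) (p : cfg2) : R :=
  fold_right (fun f acc => ginibre_factor f p * acc) 1 L.

Fixpoint ginibre_coef (L : list factor) (c : vertex -> Z) : R :=
  match L with
  | [] => if vanishes_on Lam c then 1 else 0
  | f :: L' => ginibre_coef L' (zadd c (fst f)) + sign (snd f) * ginibre_coef L' (zsub c (fst f))
  end.

Lemma BL2_cos_fst A : BL2 (cos_fst A).
Proof. apply (BL2_fst (fun a => cos (dot Lam A a))), BL_cos_dot. Qed.

Lemma BL2_cos_snd A : BL2 (cos_snd A).
Proof. apply (BL2_snd (fun a => cos (dot Lam A a))), BL_cos_dot. Qed.

Lemma BL2_ginibre_factor f : BL2 (ginibre_factor f).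
Proof. unfold ginibre_factor. auto using BL2_cos_fst, BL2_cos_snd with bl. Qed.

Lemma BL2_ginibre_prod L : BL2 (ginibre_prod L).
Proof.
  induction L as [|f L IH]; [apply BL_const|].
  apply BL_mult; [apply close2_nonneg| apply BL2_ginibre_factor| apply IH].
Qed.

Definition cos_moment (G : cfg2 -> R) (a b : vertex -> Z) : R :=
  integ2 Lam (fun p => G p * cos_fst a p * cos_snd b p).

Lemma cos_moment_factor G A s a b : BL2 G ->
  cos_moment (fun p => ginibre_factor (A, s) p * G p) a b =
  / 2 * (cos_moment G (zadd a A) b + cos_moment G (zsub a A) b)
  + / 2 * sign s * (cos_moment G a (zadd b A) + cos_moment G a (zsub b A)).
Proof.
  intros HG. unfold cos_moment.
  assert (B : forall c d, BL2 (fun p => G p * cos_fst c p * cos_snd d p))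
    by (intros; auto using BL2_cos_fst, BL2_cos_snd with bl).
  rewrite <- !integ2_plus, <- !integ2_scal, <- integ2_plus by auto with bl.
  apply integ2_ext; intros p. unfold ginibre_factor, cos_fst, cos_snd; simpl.
  rewrite !dot_zadd, !dot_zsub, !cos_plus, !cos_minus. field.
Qed.

(* Product-to-sum formulas evaluate all replica moments of a product of factors. *)
Lemma cos_moment_ginibre_prod L : forall a b,
  cos_moment (ginibre_prod L) a b =
  (/ 2) ^ length L * ginibre_coef L (zadd a b) * ginibre_coef L (zsub a b).
Proof.
  induction L as [|[A s] L IH]; intros a b.
  - unfold cos_moment, cos_fst, cos_snd; simpl.
    rewrite (integ2_ext _ _ (fun p => cos (dot Lam a (fst p)) * cos (dot Lam b (snd p))))
      by (intros; ring).
    rewrite (integ2_prod _ (fun u => cos (dot Lam a u)) (fun u => cos (dot Lam b u)))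
      by apply BL_cos_dot.
    rewrite !integ_cos_dot_full by auto.
    pose proof (vanishes_on_zadd_zsub Lam a b) as K. revert K.
    destruct (vanishes_on Lam (zadd a b)), (vanishes_on Lam (zsub a b)),
      (vanishes_on Lam a), (vanishes_on Lam b); simpl; intros K; try discriminate; ring.
  - change (ginibre_prod ((A, s) :: L)) with (fun p => ginibre_factor (A, s) p * ginibre_prod L p).
    rewrite cos_moment_factor, !IH by apply BL2_ginibre_prod.
    replace (zadd (zadd a A) b) with (zadd (zadd a b) A) by zvec_eq.
    replace (zsub (zadd a A) b) with (zadd (zsub a b) A) by zvec_eq.
    replace (zadd (zsub a A) b) with (zsub (zadd a b) A) by zvec_eq.
    replace (zsub (zsub a A) b) with (zsub (zsub a b) A) by zvec_eq.
    replace (zadd a (zadd b A)) with (zadd (zadd a b) A) by zvec_eq.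
    replace (zsub a (zadd b A)) with (zsub (zsub a b) A) by zvec_eq.
    replace (zadd a (zsub b A)) with (zsub (zadd a b) A) by zvec_eq.
    replace (zsub a (zsub b A)) with (zadd (zsub a b) A) by zvec_eq.
    simpl. destruct s; simpl; ring.
Qed.

(* The zero moment is [(1/2)^|L| * (ginibre_coef L 0)^2]. *)
Theorem ginibre_inequality L : 0 <= integ2 Lam (ginibre_prod L).
Proof.
  set (z := fun _ : vertex => 0%Z).
  rewrite (integ2_ext _ _ (fun p => ginibre_prod L p * cos_fst z p * cos_snd z p)).
  2:{ intros p; unfold cos_fst, cos_snd; rewrite !dot_zero_l, cos_0 by auto; ring. }
  fold (cos_moment (ginibre_prod L) z z). rewrite cos_moment_ginibre_prod.
  replace (zsub z z) with (zadd z z) by (unfold z; zvec_eq).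
  rewrite Rmult_assoc. apply Rmult_le_pos; [apply pow_le; lra| apply Rle_0_sqr].
Qed.

End Ginibre.

Fixpoint exp_taylor (k : nat) (y : R) : R :=
  match k with
  | O => 1
  | S j => exp_taylor j y + / INR (fact (S j)) * y ^ S j
  end.

Lemma exp_taylor_sum k y : exp_taylor k y = sum_f_R0 (fun i => / INR (fact i) * y ^ i) k.
Proof. induction k; simpl; [field| rewrite IHk; auto]. Qed.

Lemma exp_taylor_diff_le C y K : Rabs y <= C -> forall k, (K <= k)%nat ->
  Rabs (exp_taylor k y - exp_taylor K y) <= exp_taylor k C - exp_taylor K C.
Proof.
  intros Hy k Hk. induction Hk as [|k Hk IH]; [rewrite Rminus_diag, Rabs_R0; lra|].
  cbn [exp_taylor].
  replace (exp_taylor k y + / INR (fact (S k)) * y ^ S k - exp_taylor K y)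
    with ((exp_taylor k y - exp_taylor K y) + / INR (fact (S k)) * y ^ S k) by ring.
  eapply Rle_trans; [apply Rabs_triang|].
  assert (Hf : 0 < / INR (fact (S k))) by (apply Rinv_0_lt_compat, lt_0_INR, lt_O_fact).
  rewrite Rabs_mult, <- RPow_abs, (Rabs_right (/ _)) by lra.
  assert (/ INR (fact (S k)) * Rabs y ^ S k <= / INR (fact (S k)) * C ^ S k)
    by (apply Rmult_le_compat_l; [lra| apply pow_incr; split; [apply Rabs_pos| auto]]).
  lra.
Qed.

Lemma exp_taylor_uniform C eps : 0 < eps ->
  exists K, forall y, Rabs y <= C -> Rabs (exp y - exp_taylor K y) <= eps.
Proof.
  intros He. destruct (proj2_sig (exist_exp C) (eps / 3)) as [K HK]; [lra|].
  exists K. intros y Hy.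
  destruct (proj2_sig (exist_exp y) (eps / 3)) as [N HN]; [lra|].
  set (k := Nat.max N K).
  pose proof (HK K (le_n K)) as HK0.
  specialize (HK k (Nat.le_max_r N K)). specialize (HN k (Nat.le_max_l N K)).
  fold (exp C) in HK, HK0. fold (exp y) in HN. unfold Rdist in *. rewrite <- !exp_taylor_sum in *.
  pose proof (exp_taylor_diff_le C y K Hy k (Nat.le_max_r N K)).
  apply Rabs_def2 in HK, HK0. rewrite Rabs_minus_sym in HN.
  replace (exp y - exp_taylor K y)
    with ((exp y - exp_taylor k y) + (exp_taylor k y - exp_taylor K y)) by ring.
  eapply Rle_trans; [apply Rabs_triang| lra].
Qed.

Lemma integ2_nonneg_approx Lam F :
  BL2 F ->
  (forall eps, 0 < eps ->
     exists G, BL2 G /\ 0 <= integ2 Lam G /\ forall p, Rabs (F p - G p) <= eps) ->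
  0 <= integ2 Lam F.
Proof.
  intros HF H. apply Rle_plus_epsilon; intros eps Heps.
  destruct (H eps Heps) as [G [HG [HG0 HFG]]].
  apply Rle_trans with (integ2 Lam G); auto.
  rewrite <- (integ2_const Lam eps), <- integ2_plus by auto with bl.
  apply integ2_le; auto with bl.
  intros p; specialize (HFG p); apply Rabs_le_between in HFG; lra.
Qed.

Section FerromagneticExponential.
Variable Lam : list vertex.
Hypothesis ND : NoDup Lam.
Variable J : list (R * factor).
Hypothesis J_nonneg : forall j, In j J -> 0 <= fst j.

Definition ferro_sum (p : cfg2) : R := sumR (fun j => fst j * ginibre_factor Lam (snd j) p) J.

Lemma BL2_ferro_sum : BL2 ferro_sum.
Proof.
  apply (BL_sumR _ _ (fun j p => fst j * ginibre_factor Lam (snd j) p)).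
  intros; apply BL_scal, BL2_ginibre_factor.
Qed.

#[local] Hint Resolve BL2_ferro_sum BL2_ginibre_prod : bl.

Lemma BL2_ferro_sum_pow k : BL2 (fun p => ferro_sum p ^ k).
Proof. apply BL_pow; [exact close2_nonneg| apply BL2_ferro_sum]. Qed.

Lemma BL2_ferro_sum_taylor k : BL2 (fun p => exp_taylor k (ferro_sum p)).
Proof. induction k; simpl; auto using BL2_ferro_sum_pow with bl. Qed.

#[local] Hint Resolve BL2_ferro_sum_pow BL2_ferro_sum_taylor : bl.

Lemma integ2_ginibre_ferro_pow_nonneg k : forall L,
  0 <= integ2 Lam (fun p => ginibre_prod Lam L p * ferro_sum p ^ k).
Proof.
  induction k as [|k IH]; intros L.
  - rewrite (integ2_ext _ _ (ginibre_prod Lam L)) by (intros; simpl; ring).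
    now apply ginibre_inequality.
  - rewrite (integ2_ext _ _ (fun p => sumR (fun j =>
        fst j * (ginibre_prod Lam (snd j :: L) p * ferro_sum p ^ k)) J)).
    2:{ intros p. transitivity (ferro_sum p * (ginibre_prod Lam L p * ferro_sum p ^ k)).
        - simpl; ring.
        - unfold ferro_sum at 1. rewrite sumR_mult_r. apply sumR_ext; intros j _. simpl; ring. }
    rewrite integ2_sumR by auto with bl.
    apply sumR_nonneg; intros j Hj. rewrite integ2_scal by auto with bl.
    apply Rmult_le_pos; auto.
Qed.

Lemma integ2_ginibre_ferro_taylor_nonneg k L :
  0 <= integ2 Lam (fun p => ginibre_prod Lam L p * exp_taylor k (ferro_sum p)).
Proof.
  induction k as [|k IH]; simpl.
  - rewrite (integ2_ext _ _ (ginibre_prod Lam L)) by (intros; ring).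
    now apply ginibre_inequality.
  - rewrite (integ2_ext _ _ (fun p => ginibre_prod Lam L p * exp_taylor k (ferro_sum p)
        + / INR (fact (S k)) * (ginibre_prod Lam L p * ferro_sum p ^ S k)))
      by (intros; simpl; ring).
    rewrite integ2_plus, integ2_scal by auto with bl.
    pose proof (integ2_ginibre_ferro_pow_nonneg (S k) L).
    assert (0 <= / INR (fact (S k))) by (left; apply Rinv_0_lt_compat, lt_0_INR, lt_O_fact).
    apply Rplus_le_le_0_compat; auto. now apply Rmult_le_pos.
Qed.

Theorem integ2_ginibre_ferro_exp_nonneg L :
  0 <= integ2 Lam (fun p => ginibre_prod Lam L p * exp (ferro_sum p)).
Proof.
  destruct (BL2_ginibre_prod Lam L) as [[M0 HM] _].
  destruct BL2_ferro_sum as [[C HC] _].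
  set (M := Rabs M0 + 1).
  assert (HM' : forall p, Rabs (ginibre_prod Lam L p) <= M)
    by (intros p; specialize (HM p); pose proof (Rle_abs M0); unfold M; lra).
  assert (Mpos : 0 < M) by (pose proof (Rabs_pos M0); unfold M; lra).
  apply integ2_nonneg_approx; auto with bl. intros eps Heps.
  destruct (exp_taylor_uniform C (eps / M)) as [K HK]; [now apply Rdiv_lt_0_compat|].
  exists (fun p => ginibre_prod Lam L p * exp_taylor K (ferro_sum p)).
  split; [auto with bl| split; [apply integ2_ginibre_ferro_taylor_nonneg|]].
  intros p. rewrite <- Rmult_minus_distr_l, Rabs_mult.
  replace eps with (M * (eps / M)) by (field; lra).
  apply Rmult_le_compat; auto using Rabs_pos.
Qed.

End FerromagneticExponential.

(** * The diluted XY model *)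

Lemma Rdiv_le_cross x y a b : 0 < a -> 0 < b -> x * b <= y * a -> x / a <= y / b.
Proof.
  intros Ha Hb H. apply (Rmult_le_reg_r (a * b)); [nra|].
  replace (x / a * (a * b)) with (x * b) by (field; lra).
  replace (y / b * (a * b)) with (y * a) by (field; lra). auto.
Qed.

Lemma Rdiv_le_of_le_mul x y a : 0 < a -> x <= y * a -> x / a <= y.
Proof.
  intros Ha H. apply (Rmult_le_reg_r a); auto.
  replace (x / a * a) with x by (field; lra). auto.
Qed.

Definition unit_vec (x : vertex) : vertex -> Z := fun v => if vertex_eq_dec v x then 1%Z else 0%Z.
Definition edge_vec (x y : vertex) : vertex -> Z := zsub (unit_vec x) (unit_vec y).

Lemma dot_unit_vec Lam x th : NoDup Lam -> In x Lam -> dot Lam (unit_vec x) th = th x.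
Proof.
  intros ND Hx. rewrite <- (sumR_delta th Lam x) by auto.
  apply sumR_ext; intros u _. unfold unit_vec, delta. destruct vertex_eq_dec; simpl; ring.
Qed.

Lemma dot_edge_vec Lam x y th : NoDup Lam -> In x Lam -> In y Lam ->
  dot Lam (edge_vec x y) th = th x - th y.
Proof. intros. unfold edge_vec. rewrite dot_zsub, !dot_unit_vec; auto. Qed.

Lemma adjR_nonneg n d x y : 0 <= adjR n d x y.
Proof. unfold adjR; destruct ClassicalDescription.excluded_middle_informative; lra. Qed.

Definition sub_unit (z : site) (i : nat) : site :=
  firstn i z ++ (nth i z 0 - 1)%Z :: skipn (S i) z.

Lemma sub_unit_add_unit z i : (i < length z)%nat -> sub_unit (add_unit z i) i = z.
Proof.
  revert z; induction i as [|i IH]; intros [|a z] H; simpl in *; try lia.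
  - unfold sub_unit, add_unit; simpl. f_equal. lia.
  - unfold sub_unit, add_unit in *; simpl. f_equal. apply IH. lia.
Qed.

(* The first and last interior vertices of the subdivided edges at [z0] (or the far
   endpoints when [n = 0]): every neighbour of [Site z0] is among these [2 d] vertices. *)
Definition site_neighbours (n d : nat) (z0 : site) : list vertex :=
  map (fun i => edge_pt n z0 i 1) (seq 0 d)
  ++ map (fun i => edge_pt n (sub_unit z0 i) i n) (seq 0 d).

Lemma length_site_neighbours n d z0 : length (site_neighbours n d z0) = (2 * d)%nat.
Proof. unfold site_neighbours. rewrite length_app, !length_map, length_seq. lia. Qed.

Lemma adj_site_in_neighbours n d z0 v : adj n d (Site z0) v -> In v (site_neighbours n d z0).
Proof.
  intros [z [i [j [Hl [Hi [Hj [[E1 E2]|[E1 E2]]]]]]]]; unfold site_neighbours; apply in_app_iff.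
  - left. unfold edge_pt in E1. destruct (Nat.eqb_spec j 0) as [->|].
    + inversion E1; subst. apply in_map_iff. exists i; split; auto. apply in_seq; lia.
    + destruct (Nat.eqb_spec j (S n)); [lia| discriminate].
  - right. unfold edge_pt in E1. simpl in E1. destruct (Nat.eqb_spec j n) as [->|]; [|discriminate].
    inversion E1; subst. apply in_map_iff. exists i; split; [| apply in_seq; lia].
    rewrite sub_unit_add_unit by lia. auto.
Qed.

Lemma adjR_sym n d u v : adjR n d u v = adjR n d v u.
Proof.
  assert (S : forall u v, adj n d u v -> adj n d v u).
  { intros u' v' [z [i [j [Hl [Hi [Hj [[E1 E2]|[E1 E2]]]]]]]]; exists z, i, j; repeat split; auto. }
  unfold adjR.
  destruct (ClassicalDescription.excluded_middle_informative (adj n d u v)),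
    (ClassicalDescription.excluded_middle_informative (adj n d v u)); auto;
    exfalso; auto.
Qed.

Lemma sumR_adjR_site_le n d z0 Lam : NoDup Lam ->
  sumR (fun v => adjR n d (Site z0) v) Lam <= 2 * INR d.
Proof.
  intros ND. set (C := site_neighbours n d z0).
  set (inC := fun v => if in_dec vertex_eq_dec v C then true else false).
  apply Rle_trans with (sumR (fun v => if inC v then 1 else 0) Lam).
  - apply sumR_le. intros v _. unfold adjR, inC.
    destruct (ClassicalDescription.excluded_middle_informative (adj n d (Site z0) v)) as [A|A],
      (in_dec vertex_eq_dec v C) as [I|I]; try lra.
    exfalso; apply I, adj_site_in_neighbours, A.
  - rewrite sumR_indicator.
    replace (2 * INR d) with (INR (length C))
      by (unfold C; rewrite length_site_neighbours, mult_INR; simpl; ring).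
    apply le_INR, NoDup_incl_length; [now apply NoDup_filter|].
    intros v Hv. apply filter_In in Hv as [_ Hv].
    unfold inC in Hv. destruct in_dec; auto; discriminate.
Qed.

Section Model.
Variables (n d : nat) (Lam : list vertex) (b1 b2 : R).
Hypothesis ND : NoDup Lam.
Hypothesis hb1 : 0 <= b1.
Hypothesis hb2 : 0 <= b2.

Definition coupling (x y : vertex) : R := if orb (is_site x) (is_site y) then b1 else b2.

(* Each unordered edge is counted twice in [Lam x Lam], hence the factor [1/2]. *)
Definition bond_weight (r : vertex -> R) (x y : vertex) : R :=
  / 2 * (adjR n d x y * coupling x y * r x * r y).

Lemma coupling_nonneg x y : 0 <= coupling x y.
Proof. unfold coupling; destruct orb; lra. Qed.

Lemma bond_weight_mono r r' x y : (forall v, 0 <= r v <= r' v) ->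
  0 <= bond_weight r x y <= bond_weight r' x y.
Proof.
  intros H. unfold bond_weight. pose proof (adjR_nonneg n d x y). pose proof (coupling_nonneg x y).
  destruct (H x), (H y).
  assert (0 <= r x * r y) by nra. assert (r x * r y <= r' x * r' y) by nra.
  assert (0 <= adjR n d x y * coupling x y) by nra.
  split; nra.
Qed.

Lemma neg_Ham_bonds r th : - Ham n d Lam b1 b2 r th =
  sumR (fun x => sumR (fun y => bond_weight r x y * cos (dot Lam (edge_vec x y) th)) Lam) Lam.
Proof.
  unfold Ham. rewrite Ropp_mult_distr_l, Ropp_involutive, <- sumR_scal.
  apply sumR_ext; intros x Hx. rewrite <- sumR_scal. apply sumR_ext; intros y Hy.
  rewrite dot_edge_vec by auto. unfold bond_weight, coupling. field.
Qed.

Lemma BL_neg_Ham_bonds r : BLV (fun th =>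
  sumR (fun x => sumR (fun y => bond_weight r x y * cos (dot Lam (edge_vec x y) th)) Lam) Lam).
Proof.
  apply (BL_sumR _ _ (fun x th =>
    sumR (fun y => bond_weight r x y * cos (dot Lam (edge_vec x y) th)) Lam)).
  intros x _. apply (BL_sumR _ _ (fun y th => bond_weight r x y * cos (dot Lam (edge_vec x y) th))).
  auto with bl.
Qed.

Lemma BL_boltz r : BLV (boltz n d Lam b1 b2 r).
Proof.
  apply (BL_ext _ _ (fun th => exp (sumR (fun x => sumR (fun y =>
    bond_weight r x y * cos (dot Lam (edge_vec x y) th)) Lam) Lam))).
  - intros th; unfold boltz; rewrite neg_Ham_bonds; auto.
  - apply BL_exp, BL_neg_Ham_bonds.
Qed.

Lemma BL_cos_m m : BLV (cos_m Lam m).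
Proof. apply (BL_cos_dot Lam m). Qed.

#[local] Hint Resolve BL_boltz BL_cos_m : bl.

Definition partition_fn r := integ Lam (fun th => boltz n d Lam b1 b2 r th) theta0.
Definition cos_integral r m :=
  integ Lam (fun th => boltz n d Lam b1 b2 r th * cos_m Lam m th) theta0.

Lemma partition_fn_pos r : 0 < partition_fn r.
Proof.
  destruct (BL_neg_Ham_bonds r) as [[M HM] _].
  apply Rlt_le_trans with (exp (- M)); [apply exp_pos|].
  unfold partition_fn. rewrite <- (integ_const Lam (exp (- M)) theta0) at 1.
  apply integ_le; auto with bl.
  intros a. unfold boltz. rewrite neg_Ham_bonds. apply exp_le_compat.
  specialize (HM a). apply Rabs_le_between in HM. lra.
Qed.

(* [(w + w')/2 (cos a + cos b) + (w' - w)/2 (cos a - cos b) = w' cos a + w cos b]. *)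
Definition replica_couplings (r r' : vertex -> R) : list (R * factor) :=
  flat_map (fun xy =>
    let w := bond_weight r (fst xy) (snd xy) in
    let w' := bond_weight r' (fst xy) (snd xy) in
    [((w + w') / 2, (edge_vec (fst xy) (snd xy), true));
     ((w' - w) / 2, (edge_vec (fst xy) (snd xy), false))])
    (list_prod Lam Lam).

Lemma replica_couplings_nonneg r r' : (forall v, 0 <= r v <= r' v) ->
  forall j, In j (replica_couplings r r') -> 0 <= fst j.
Proof.
  intros H j Hj. apply in_flat_map in Hj as [[x y] [_ Hj]].
  destruct (bond_weight_mono r r' x y H).
  destruct Hj as [<-|[<-|[]]]; simpl; lra.
Qed.

Lemma ferro_sum_replica_couplings r r' p :
  ferro_sum Lam (replica_couplings r r') p =
  - Ham n d Lam b1 b2 r' (fst p) + - Ham n d Lam b1 b2 r (snd p).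
Proof.
  unfold ferro_sum, replica_couplings.
  rewrite sumR_flat_map, sumR_list_prod, !neg_Ham_bonds, <- sumR_plus.
  apply sumR_ext; intros x _. rewrite <- sumR_plus. apply sumR_ext; intros y _.
  unfold ginibre_factor, cos_fst, cos_snd; simpl. field.
Qed.

(* Ginibre's inequality for the two replicas [(th, th')] distributed as [mu_r' x mu_r]. *)
Lemma cos_integral_cross_le r r' m : (forall v, 0 <= r v <= r' v) ->
  cos_integral r m * partition_fn r' <= cos_integral r' m * partition_fn r.
Proof.
  intros H.
  pose proof (integ2_ginibre_ferro_exp_nonneg Lam ND (replica_couplings r r')
    (replica_couplings_nonneg r r' H) [(m, false)]) as P.
  assert (E : cos_integral r' m * partition_fn r - partition_fn r' * cos_integral r m =
    integ2 Lam (fun p => ginibre_prod Lam [(m, false)] p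
                         * exp (ferro_sum Lam (replica_couplings r r') p))).
  { unfold cos_integral, partition_fn.
    set (B := boltz n d Lam b1 b2).
    set (Bc := fun r th => B r th * cos_m Lam m th).
    assert (HB : forall r, BLV (B r)) by apply BL_boltz.
    assert (HBc : forall r, BLV (Bc r)) by (intros; unfold Bc; auto with bl).
    change (integ Lam (fun th => B r' th * cos_m Lam m th) theta0) with (integ Lam (Bc r') theta0).
    change (integ Lam (fun th => B r th * cos_m Lam m th) theta0) with (integ Lam (Bc r) theta0).
    rewrite <- !integ2_prod, <- integ2_minus by (try apply BL2_prod; auto).
    apply integ2_ext; intros p. rewrite ferro_sum_replica_couplings, exp_plus.
    unfold Bc, B, ginibre_prod, ginibre_factor, cos_fst, cos_snd, boltz, cos_m, dot; simpl. ring. }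
  lra.
Qed.

Lemma quenched_mono r r' m : (forall v, 0 <= r v <= r' v) ->
  quenched n d Lam b1 b2 r (cos_m Lam m) <= quenched n d Lam b1 b2 r' (cos_m Lam m).
Proof.
  intros H. apply Rdiv_le_cross; try apply partition_fn_pos.
  now apply cos_integral_cross_le.
Qed.

Lemma bond_weight_flip_le r x u v c :
  (forall w, 0 <= r w <= 1) -> is_site x = true -> Rabs c <= 1 ->
  (bond_weight (upd r x 1) u v - bond_weight (upd r x 0) u v) * c <=
  / 2 * b1 * (adjR n d u v * (delta u x + delta v x)).
Proof.
  intros Hr Hx Hc. apply Rabs_le_between in Hc. pose proof (adjR_nonneg n d u v).
  unfold bond_weight, coupling, delta, upd.
  destruct (vertex_eq_dec u x) as [->|Eu], (vertex_eq_dec v x) as [->|Ev];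
    rewrite ?Hx; simpl; rewrite ?orb_true_r.
  - assert (0 <= adjR n d x x * b1) by nra. nra.
  - destruct (Hr v). assert (0 <= adjR n d x v * b1) by nra.
    assert (adjR n d x v * b1 * (r v * c) <= adjR n d x v * b1 * 1)
      by (apply Rmult_le_compat_l; nra). nra.
  - destruct (Hr u). assert (0 <= adjR n d u x * b1) by nra.
    assert (adjR n d u x * b1 * (r u * c) <= adjR n d u x * b1 * 1)
      by (apply Rmult_le_compat_l; nra). nra.
  - assert (0 <= adjR n d u v * b1) by nra. nra.
Qed.

Lemma sum_bonds_at_site_le z0 : In (Site z0) Lam ->
  sumR (fun u => sumR (fun v => adjR n d u v * (delta u (Site z0) + delta v (Site z0))) Lam) Lam
  <= 4 * INR d.
Proof.
  intros Hin. set (x := Site z0).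
  rewrite (sumR_ext _ (fun u => delta u x * sumR (fun v => adjR n d u v) Lam
                                + sumR (fun v => delta v x * adjR n d u v) Lam)).
  2:{ intros u _. rewrite <- sumR_scal, <- sumR_plus. apply sumR_ext; intros v _. ring. }
  rewrite sumR_plus, (sumR_delta (fun u => sumR (fun v => adjR n d u v) Lam)) by auto.
  rewrite (sumR_ext (fun u => sumR (fun v => delta v x * adjR n d u v) Lam)
                    (fun u => adjR n d x u)).
  2:{ intros u _. rewrite (sumR_delta (fun v => adjR n d u v)) by auto. apply adjR_sym. }
  pose proof (sumR_adjR_site_le n d z0 Lam ND). fold x in H. lra.
Qed.

(* Only bonds at [x] change, each ordered pair by at most [b1 / 2], and [x] has at most [2 d]
   neighbours. *)
Lemma neg_Ham_flip_le r x th : (forall w, 0 <= r w <= 1) -> is_site x = true -> In x Lam ->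
  - Ham n d Lam b1 b2 (upd r x 1) th <= - Ham n d Lam b1 b2 (upd r x 0) th + 2 * INR d * b1.
Proof.
  intros Hr Hx Hin. rewrite !neg_Ham_bonds.
  destruct x as [z0| ]; [|discriminate].
  apply Rle_trans with (sumR (fun u => sumR (fun v => bond_weight (upd r (Site z0) 0) u v
    * cos (dot Lam (edge_vec u v) th)) Lam) Lam + / 2 * b1 * sumR (fun u => sumR (fun v =>
    adjR n d u v * (delta u (Site z0) + delta v (Site z0))) Lam) Lam).
  - rewrite <- sumR_scal, <- sumR_plus. apply sumR_le; intros u _.
    rewrite <- sumR_scal, <- sumR_plus. apply sumR_le; intros v _.
    pose proof (bond_weight_flip_le r (Site z0) u v (cos (dot Lam (edge_vec u v) th)) Hr Hx
      (Rabs_le _ _ (COS_bound _))). lra.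
  - pose proof (sum_bonds_at_site_le z0 Hin). nra.
Qed.

Lemma partition_fn_flip_le r x : (forall w, 0 <= r w <= 1) -> is_site x = true -> In x Lam ->
  partition_fn (upd r x 1) <= exp (2 * INR d * b1) * partition_fn (upd r x 0).
Proof.
  intros Hr Hx Hin. unfold partition_fn.
  rewrite <- integ_scal by auto with bl.
  apply integ_le; auto with bl.
  intros th. unfold boltz. rewrite <- exp_plus. apply exp_le_compat.
  pose proof (neg_Ham_flip_le r x th Hr Hx Hin). lra.
Qed.

End Model.

(** * Averaging over the dilution *)

Definition binary (r : vertex -> R) := forall v, r v = 0 \/ r v = 1.

Lemma binary_upd r x b : binary r -> b = 0 \/ b = 1 -> binary (upd r x b).
Proof. intros H Hb v; unfold upd; destruct vertex_eq_dec; auto. Qed.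

Lemma binary_unit_interval r : binary r -> forall v, 0 <= r v <= 1.
Proof. intros H v; destruct (H v) as [-> | ->]; lra. Qed.

Lemma upd_comm r x y b c : x <> y -> upd (upd r x b) y c = upd (upd r y c) x b.
Proof.
  intros H; apply functional_extensionality; intros v; unfold upd.
  destruct (vertex_eq_dec v y), (vertex_eq_dec v x); subst; auto; congruence.
Qed.

Lemma bern_ext p l G H r : (forall r', G r' = H r') -> bern p l G r = bern p l H r.
Proof. intros E; replace H with G; auto; now apply functional_extensionality. Qed.

Lemma bern_scal p l c G r : bern p l (fun r => c * G r) r = c * bern p l G r.
Proof. revert r; induction l as [|y l IH]; intros r; simpl; auto. rewrite !IH; ring. Qed.

Lemma bern_upd_comm p l x b : ~ In x l -> forall G r,
  bern p l G (upd r x b) = bern p l (fun r' => G (upd r' x b)) r.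
Proof.
  induction l as [|y l IH]; intros Hx G r; simpl; auto.
  assert (y <> x) by (intros ->; apply Hx; now left).
  assert (~ In x l) by (intros H'; apply Hx; now right).
  rewrite !upd_comm with (x := x) (y := y), !IH by auto. auto.
Qed.

Lemma bern_mono p l : 0 <= p <= 1 -> forall G H r,
  (forall r', binary r' -> G r' <= H r') -> binary r -> bern p l G r <= bern p l H r.
Proof.
  intros Hp; induction l as [|y l IH]; intros G H r HGH Hr; simpl; auto.
  assert (bern p l G (upd r y 1) <= bern p l H (upd r y 1))
    by (apply IH; auto; apply binary_upd; auto).
  assert (bern p l G (upd r y 0) <= bern p l H (upd r y 0))
    by (apply IH; auto; apply binary_upd; auto).
  nra.
Qed.

Lemma bern_pos p l : 0 <= p <= 1 -> forall G r,
  (forall r', binary r' -> 0 < G r') -> binary r -> 0 < bern p l G r.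
Proof.
  intros Hp; induction l as [|y l IH]; intros G r HG Hr; simpl; auto.
  assert (0 < bern p l G (upd r y 1)) by (apply IH; auto; apply binary_upd; auto).
  assert (0 < bern p l G (upd r y 0)) by (apply IH; auto; apply binary_upd; auto).
  destruct (Req_dec p 0) as [->|]; nra.
Qed.

(* One site: tilting Bernoulli(pb) by a weight [Z] with [Z1 <= rho Z0] yields a law
   dominated by Bernoulli(p0), tested against the increasing pair [g0 <= g1]. *)
Lemma two_point_domination pb p0 rho g0 g1 Z0 Z1 A0 A1 :
  0 <= pb <= 1 -> 0 <= p0 <= 1 -> pb * rho * (1 - p0) <= p0 * (1 - pb) ->
  g0 <= g1 -> 0 <= Z0 -> Z1 <= rho * Z0 -> A0 <= g0 * Z0 -> A1 <= g1 * Z1 ->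
  pb * A1 + (1 - pb) * A0 <= (p0 * g1 + (1 - p0) * g0) * (pb * Z1 + (1 - pb) * Z0).
Proof.
  intros Hpb Hp0 Hbal Hg HZ0 HZ HA0 HA1.
  set (K := p0 * (1 - pb) * Z0 - (1 - p0) * pb * Z1).
  assert (HK : 0 <= K).
  { unfold K.
    assert ((1 - p0) * pb * Z1 <= (1 - p0) * pb * (rho * Z0)) by (apply Rmult_le_compat_l; nra).
    assert (pb * rho * (1 - p0) * Z0 <= p0 * (1 - pb) * Z0) by (apply Rmult_le_compat_r; lra).
    nra. }
  assert (0 <= (g1 - g0) * K) by (apply Rmult_le_pos; lra).
  assert (pb * A1 <= pb * (g1 * Z1)) by (apply Rmult_le_compat_l; lra).
  assert ((1 - pb) * A0 <= (1 - pb) * (g0 * Z0)) by (apply Rmult_le_compat_l; lra).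
  replace ((p0 * g1 + (1 - p0) * g0) * (pb * Z1 + (1 - pb) * Z0))
    with (pb * (g1 * Z1) + (1 - pb) * (g0 * Z0) + (g1 - g0) * K) by (unfold K; ring).
  lra.
Qed.

Lemma bern_domination pb p0 rho (Z f : (vertex -> R) -> R) l :
  0 <= pb <= 1 -> 0 <= p0 <= 1 -> pb * rho * (1 - p0) <= p0 * (1 - pb) -> NoDup l ->
  (forall r, binary r -> 0 < Z r) ->
  (forall r x, In x l -> binary r -> f (upd r x 0) <= f (upd r x 1)) ->
  (forall r x, In x l -> binary r -> Z (upd r x 1) <= rho * Z (upd r x 0)) ->
  forall r, binary r -> bern pb l (fun r => Z r * f r) r <= bern p0 l f r * bern pb l Z r.
Proof.
  intros Hpb Hp0 Hbal ND HZ. induction ND as [|x l Hx ND IH]; intros Hf HR r Hr; simpl; [lra|].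
  assert (B1 : binary (upd r x 1)) by (apply binary_upd; auto).
  assert (B0 : binary (upd r x 0)) by (apply binary_upd; auto).
  apply two_point_domination with rho; auto.
  - rewrite !bern_upd_comm by auto. apply bern_mono; auto.
    intros r' Hr'. apply Hf; auto; now left.
  - left; apply bern_pos; auto.
  - rewrite !bern_upd_comm, <- bern_scal by auto. apply bern_mono; auto.
    intros r' Hr'. apply HR; auto; now left.
  - apply IH; auto; intros; [apply Hf| apply HR]; auto; now right.
  - apply IH; auto; intros; [apply Hf| apply HR]; auto; now right.
Qed.

Lemma tilted_parameter pbar c : 0 < pbar < 1 ->
  let p0 := pbar / (pbar + (1 - pbar) * exp (- c)) in
  0 <= p0 <= 1 /\ pbar * exp c * (1 - p0) <= p0 * (1 - pbar).
Proof.
  intros hp p0. pose proof (exp_pos c).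
  assert (HD : 0 < pbar * exp c + (1 - pbar)) by nra.
  assert (E : p0 = pbar * exp c / (pbar * exp c + (1 - pbar)))
    by (unfold p0; rewrite exp_Ropp; field; lra).
  rewrite E. split; [split|].
  - apply Rlt_le, Rdiv_lt_0_compat; nra.
  - apply Rdiv_le_of_le_mul; lra.
  - right; field; lra.
Qed.

Theorem proposition5p1 (n d : nat) (b1 b2 pbar : R)
  (hb1 : 0 < b1) (hb2 : 0 < b2) (hp : 0 < pbar < 1)
  (Lam : list vertex) (hnd : NoDup Lam)
  (hval : forall v, In v Lam -> valid_vertex n d v)
  (m : vertex -> Z) :
  let p0 := pbar / (pbar + (1 - pbar) * exp (- (2 * INR d * b1))) in
  annealed n d Lam b1 b2 pbar (cos_m Lam m)
  <= Ep p0 Lam (fun r => quenched n d Lam b1 b2 r (cos_m Lam m)).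
Proof.
  intros p0. destruct (tilted_parameter pbar (2 * INR d * b1) hp) as [Hp0 Hbal].
  set (Z := partition_fn n d Lam b1 b2).
  set (f := fun r => quenched n d Lam b1 b2 r (cos_m Lam m)).
  assert (HZ : forall r, 0 < Z r) by (intros; apply partition_fn_pos; auto; lra).
  assert (Hr1 : binary r1) by (intros v; now right).
  unfold annealed, Ep.
  change (fun r => integ Lam (fun th => boltz n d Lam b1 b2 r th) theta0) with Z.
  rewrite (bern_ext pbar _ _ (fun r => Z r * f r)).
  2:{ intros r. unfold f, quenched.
      change (integ Lam (fun th => boltz n d Lam b1 b2 r th) theta0) with (Z r).
      pose proof (HZ r). field. lra. }
  apply Rdiv_le_of_le_mul; [apply bern_pos; auto; split; lra|].
  apply (bern_domination pbar p0 (exp (2 * INR d * b1))); auto using NoDup_filter; try lra.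
  - intros r x _ Hr. apply quenched_mono; auto; try lra.
    intros v; pose proof (binary_unit_interval r Hr v). unfold upd; destruct vertex_eq_dec; lra.
  - intros r x Hx Hr. apply filter_In in Hx as [Hx Hs].
    apply partition_fn_flip_le; auto; try lra. now apply binary_unit_interval.
Qed.
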